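(* Let $p$ be any prime, $G=SL(2,\mathbb{Z}_p)$, $T=\{F\in SL(2,\mathbb{Z}_p):\mathrm{Tr}(F)\neq 2\pmod p\}$ and $\Gamma=\Gamma(G,T)$. Then the independence number satisfies $p\leq\alpha(\Gamma)\leq p+1$.
   Context: The Cayley graph $\Gamma(G,T)$ has vertex set $G$ and an edge between $g_1,g_2$ iff $g_1^{-1}g_2\in T$. An independent set is a set of pairwise non-adjacent vertices; $\alpha(\Gamma)$ is the largest size of an independent set. *)

From HB Require Import structures.
From mathcomp Require Import all_boot all_order all_algebra all_fingroup.
Set Implicit Arguments. Unset Strict Implicit. Unset Printing Implicit Defensive.
Import GRing.Theory.
Local Open Scope ring_scope.

(* Z_p for p prime is the prime field 'F_p; SL(2,Z_p) = 2x2 matrices of det 1. *)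
Definition SL2 (p : nat) : {set 'M['F_p]_2} := [set M | \det M == 1].

Definition Tset (p : nat) : {set 'M['F_p]_2} :=
  [set F in SL2 p | \tr F != 2%:R].

Definition cayley_adj (p : nat) (g1 g2 : 'M['F_p]_2) : bool :=
  (invmx g1 *m g2) \in Tset p.

Definition independent (p : nat) (S : {set 'M['F_p]_2}) : bool :=
  (S \subset SL2 p) &&
  [forall g1 in S, forall g2 in S, (g1 != g2) ==> ~~ cayley_adj g1 g2].

Definition alpha (p : nat) : nat :=
  \max_(S : {set 'M['F_p]_2} | independent S) #|S|.

From mathcomp Require Import all_boot all_order all_algebra all_fingroup.
From mathcomp Require Import ring.
Set Implicit Arguments. Unset Strict Implicit. Unset Printing Implicit Defensive.
Import GRing.Theory.
Local Open Scope ring_scope.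

(* For g, h of determinant 1 we have tr (g^-1 h) = 2 - det (h - g), so an
   independent set of the Cayley graph is a set of matrices of determinant 1
   whose pairwise differences are singular.  The upper unitriangular matrices
   form such a set with p elements.  Conversely, if g0 lies in such a set S,
   then every g in S gives N := g0^-1 (g - g0) with tr N = det N = 0, and these
   N have pairwise singular differences; on a family of this kind the
   off-diagonal coordinate (the (0,1) entry, or the (1,0) entry when the former
   vanishes) is injective, hence #|S| <= p. *)

Section Matrix2.
Variable R : comNzRingType.
Implicit Types A B X : 'M[R]_2.

Lemma matrix2P A B : A 0 0 = B 0 0 -> A 0 1 = B 0 1 ->
  A 1 0 = B 1 0 -> A 1 1 = B 1 1 -> A = B.
Proof.
move=> e00 e01 e10 e11; apply/matrixP=> i j.
have ord2 (k : 'I_2) : (k = 0) \/ (k = 1).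
  by case: k => [[|[|//]] ?]; [left | right]; apply: val_inj.
by case: (ord2 i) => ->; case: (ord2 j) => ->.
Qed.

Lemma det_mx2 A : \det A = A 0 0 * A 1 1 - A 0 1 * A 1 0.
Proof.
rewrite (expand_det_row _ 0) !big_ord_recl big_ord0 /cofactor !det_mx11 !mxE /=.
have -> : lift 0 (0 : 'I_1) = 1 :> 'I_2 by apply: val_inj.
have -> : lift 1 (0 : 'I_1) = 0 :> 'I_2 by apply: val_inj.
rewrite expr0 expr1; ring.
Qed.

Lemma mxtrace_mx2 A : \tr A = A 0 0 + A 1 1.
Proof.
by rewrite /mxtrace !big_ord_recl big_ord0 addr0; congr (A _ _ + A _ _); apply: val_inj.
Qed.

Lemma det_1D_mx2 X : \det (1 + X) = 1 + \tr X + \det X.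
Proof. by rewrite !det_mx2 mxtrace_mx2 !mxE /=; ring. Qed.

Lemma mxtrace_mx2_det1D X : \det (1 + X) = 1 -> \tr X = - \det X.
Proof.
move=> dX; apply/eqP; rewrite -addr_eq0; apply/eqP/(addrI 1).
by rewrite addr0 addrA -det_1D_mx2.
Qed.

End Matrix2.

Section Field.
Variable F : fieldType.
Implicit Types g h N M : 'M[F]_2.

Lemma mxtrace_invmx_mul g h : \det g = 1 -> \det h = 1 ->
  \tr (invmx g *m h) = 2%:R - \det (h - g).
Proof.
move=> dg dh; have ug : g \in unitmx by rewrite unitmxE dg unitr1.
have dgV : \det (invmx g) = 1 by rewrite det_inv dg invr1.
have eA : invmx g *m h = 1 + invmx g *m (h - g).
  by rewrite mulmxBr mulVmx // addrC subrK.
have dX : \det (invmx g *m (h - g)) = \det (h - g) by rewrite det_mulmx dgV mul1r.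
have := mxtrace_mx2_det1D (X := invmx g *m (h - g)).
rewrite -eA det_mulmx dgV dh mul1r dX => /(_ erefl) trX.
by rewrite eA mxtraceD mxtrace1 trX.
Qed.

Definition mx2_offdiag N : F := if N 0 1 != 0 then N 0 1 else N 1 0.

Lemma nilpotent_mx2_inj N M :
  \tr N = 0 -> \det N = 0 -> \tr M = 0 -> \det M = 0 -> \det (N - M) = 0 ->
  mx2_offdiag N = mx2_offdiag M -> N = M.
Proof.
have tr0 (X : 'M[F]_2) : \tr X = 0 -> X 1 1 = - X 0 0.
  by rewrite mxtrace_mx2 => /eqP; rewrite addrC addr_eq0 => /eqP.
rewrite /mx2_offdiag !det_mx2 !mxE => /tr0 eN dN /tr0 eM dM dNM hk.
rewrite eN eM in dN dM dNM.
suff [e00 e01 e10] : [/\ N 0 0 = M 0 0, N 0 1 = M 0 1 & N 1 0 = M 1 0].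
  by apply: matrix2P; rewrite // eN eM e00.
move: (N 0 0) (N 0 1) (N 1 0) (M 0 0) (M 0 1) (M 1 0) dN dM dNM hk.
move=> x y z x' y' z' dN dM dNM hk.
have sq0 (u : F) : u ^+ 2 = 0 -> u = 0 by move=> /eqP; rewrite sqrf_eq0 => /eqP.
have diag_eq0 (u v w : F) : u * - u - v * w = 0 -> v = 0 -> u = 0.
  by move=> d v0; apply/sq0/oppr_inj; rewrite oppr0 -d v0; ring.
case: (eqVneq y 0) => [y0|yn0]; case: (eqVneq y' 0) => [y'0|y'n0];
  rewrite ?y0 ?y'0 ?eqxx ?yn0 ?y'n0 /= in hk.
- by rewrite (diag_eq0 _ _ _ dN y0) (diag_eq0 _ _ _ dM y'0) y0 y'0 hk.
- have e : y' ^+ 2 =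
      (x - x') * (- x - - x') - (y - y') * (z - z') - (x' * - x' - y' * z').
    by rewrite (diag_eq0 _ _ _ dN y0) y0 hk; ring.
  by move: y'n0; rewrite dM dNM subr0 in e; rewrite (sq0 _ e) eqxx.
- have e : y ^+ 2 =
      (x - x') * (- x - - x') - (y - y') * (z - z') - (x * - x - y * z).
    by rewrite (diag_eq0 _ _ _ dM y'0) y'0 -hk; ring.
  by move: yn0; rewrite dN dNM subr0 in e; rewrite (sq0 _ e) eqxx.
- subst y'.
  have e : (x - x') ^+ 2 = - ((x - x') * (- x - - x') - (y - y) * (z - z')) by ring.
  rewrite dNM oppr0 in e; move/sq0/eqP: e; rewrite subr_eq0 => /eqP ex; subst x'.
  have e : y * z - y * z' = (x * - x - y * z') - (x * - x - y * z) by ring.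
  rewrite dN dM subrr in e; move/eqP: e; rewrite subr_eq0 => /eqP/(mulfI yn0) ez.
  by rewrite ez.
Qed.

Definition unitri (t : F) : 'M[F]_2 := 1 + t *: delta_mx 0 1.

Lemma unitri01 t : unitri t 0 1 = t.
Proof. by rewrite !mxE /=; ring. Qed.

Lemma det_unitri t : \det (unitri t) = 1.
Proof. by rewrite det_mx2 !mxE /=; ring. Qed.

Lemma det_unitriB s t : \det (unitri s - unitri t) = 0.
Proof. by rewrite det_mx2 !mxE /=; ring. Qed.

End Field.

Section FinField.
Variable F : finFieldType.

Lemma card_pairwise_singular_le (S : {set 'M[F]_2}) :
  {in S, forall g, \det g = 1} -> {in S &, forall g h, \det (g - h) = 0} ->
  (#|S| <= #|F|)%N.
Proof.
move=> detS singS; case: (set_0Vmem S) => [->|[g0 g0S]]; first by rewrite cards0.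
have ug0 : g0 \in unitmx by rewrite unitmxE detS ?unitr1.
have detV0 : \det (invmx g0) = 1 by rewrite det_inv detS ?invr1.
pose N g := invmx g0 *m (g - g0).
have detN g : g \in S -> \det (N g) = 0 by move=> gS; rewrite det_mulmx singS ?mulr0.
have trN g : g \in S -> \tr (N g) = 0.
  move=> gS; rewrite (mxtrace_mx2_det1D (X := N g)) ?detN ?oppr0 //.
  by rewrite /N mulmxBr mulVmx // addrC subrK det_mulmx detV0 detS ?mul1r.
have detNB g h : g \in S -> h \in S -> \det (N g - N h) = 0.
  by move=> gS hS; rewrite -mulmxBr opprB addrA subrK det_mulmx singS ?mulr0.
have injN : {in S &, injective (fun g => mx2_offdiag (N g))}.
  move=> g h gS hS /(nilpotent_mx2_inj (trN _ gS) (detN _ gS) (trN _ hS) (detN _ hS)).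
  by move=> /(_ (detNB _ _ gS hS))/(can_inj (mulKVmx ug0))/addIr.
by rewrite -(card_in_imset injN) max_card.
Qed.

Lemma card_unitri : #|[set unitri t | t : F]| = #|F|.
Proof.
by apply: card_imset => s t /(congr1 (fun M : 'M[F]_2 => M 0 1)); rewrite !unitri01.
Qed.

End FinField.

Section CayleyGraph.
Variable p : nat.
Implicit Types (g h : 'M['F_p]_2) (S : {set 'M['F_p]_2}).

Lemma SL2_det g : g \in SL2 p -> \det g = 1.
Proof. by rewrite inE => /eqP. Qed.

Lemma cayley_adjE g h : g \in SL2 p -> h \in SL2 p ->
  cayley_adj g h = (\det (h - g) != 0).
Proof.
move=> /SL2_det dg /SL2_det dh.
rewrite /cayley_adj !inE det_mulmx det_inv dg dh invr1 mul1r eqxx /=.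
by rewrite mxtrace_invmx_mul // -subr_eq0 addrAC subrr add0r oppr_eq0.
Qed.

Lemma independentP S :
  reflect (S \subset SL2 p /\ {in S &, forall g h, \det (g - h) = 0})
          (independent S).
Proof.
apply: (iffP andP) => -[sub indS]; split=> //.
  move=> g h gS hS; have [->|neq] := eqVneq g h; first by rewrite subrr det0.
  move/forall_inP: indS => /(_ _ hS)/forall_inP/(_ _ gS)/implyP.
  by rewrite eq_sym neq cayley_adjE ?(subsetP sub) // negbK => /(_ isT)/eqP.
apply/forall_inP=> g gS; apply/forall_inP=> h hS; apply/implyP=> _.
by rewrite cayley_adjE ?(subsetP sub) // indS // eqxx.
Qed.

End CayleyGraph.

Local Close Scope ring_scope.

Theorem mainTheorem5 (p : nat) (hp : prime p) : p <= alpha p <= p.+1.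
Proof.
apply/andP; split.
  have indU : independent [set unitri t | t : 'F_p].
    apply/independentP; split=> [|_ _ /imsetP[s _ ->] /imsetP[t _ ->]].
      by apply/subsetP=> _ /imsetP[t _ ->]; rewrite inE det_unitri.
    exact: det_unitriB.
  by rewrite -[leqLHS](card_Fp hp) -card_unitri; apply: leq_bigmax_cond.
apply/bigmax_leqP=> S /independentP[sub singS]; apply: leqW.
rewrite -[leqRHS](card_Fp hp); apply: card_pairwise_singular_le singS.
by move=> g /(subsetP sub)/SL2_det.
Qed.
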